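(* Let $\Gamma$ be the operator defined below. If $\Gamma=\sum_iA_i\otimes B_i\otimes C_i$ (finite sum) with nonzero positive semidefinite operators $A_i$ on $\mathcal H_1\otimes\mathcal H_2$, $B_i$ on $\mathcal H_3\otimes\mathcal H_4$, $C_i$ on $\mathcal H_5\otimes\mathcal H_6$, then for every $i$ there are $\alpha,\beta,\gamma>0$ and a triple $(a,b,c)\in T$ with $(A_i,B_i,C_i)=(\alpha[\mathbf a],\beta[\mathbf b],\gamma[\mathbf c])$, where $T=\{(0,0,0),(1,2,0),(2,3,0),(3,1,0),(0,3,1),(1,1,1),(2,0,1),(3,2,1),(0,1,2),(1,3,2),(2,2,2),(3,0,2),(0,2,3),(1,0,3),(2,1,3),(3,3,3)\}$.
   Context: $\mathcal H_1,\mathcal H_3,\mathcal H_5\cong\mathbb C^2$ and $\mathcal H_2,\mathcal H_4,\mathcal H_6\cong\mathbb C^2\otimes\mathbb C^2$. On each pair ($\mathcal H_1\otimes\mathcal H_2$, $\mathcal H_3\otimes\mathcal H_4$, $\mathcal H_5\otimes\mathcal H_6$) define $|\mathbf 0\rangle=|0\rangle|00\rangle$, $|\mathbf 1\rangle=|1\rangle|01\rangle$, $|\mathbf 2\rangle=|+\rangle|10\rangle$, $|\mathbf 3\rangle=|-\rangle|11\rangle$, where $|\pm\rangle=(|0\rangle\pm|1\rangle)/\sqrt2$, and $[\mathbf x]:=|\mathbf x\rangle\langle\mathbf x|$. Let $\Gamma=\frac12\sum_{(a,b,c)\in T}[\mathbf a]\otimes[\mathbf b]\otimes[\mathbf c]$,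 the three factors acting on $\mathcal H_1\otimes\mathcal H_2$, $\mathcal H_3\otimes\mathcal H_4$, $\mathcal H_5\otimes\mathcal H_6$ respectively. *)

(* Operators on C^2 (x) C^2 (x) C^2 = C^8 as 8x8 matrices over an
   arbitrary numeric algebraically closed field C (covers the complex numbers). *)
From HB Require Import structures.
From mathcomp Require Import all_boot all_order all_algebra.
From mathcomp Require Export mxtens.
Set Implicit Arguments. Unset Strict Implicit. Unset Printing Implicit Defensive.
Import Order.TTheory GRing.Theory Num.Theory.
Local Open Scope ring_scope.

Definition adjmx (C : numClosedFieldType) m n (M : 'M[C]_(m, n)) : 'M[C]_(n, m) :=
  map_mx Num.conj (M^T).

Definition psd (C : numClosedFieldType) n (M : 'M[C]_n) : Prop :=
  adjmx M = M /\ forall v : 'cV[C]_n, 0 <= (adjmx v *m M *m v) 0 0.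

Definition ket0 (C : numClosedFieldType) : 'cV[C]_2 := \col_i (if i == 0 :> nat then 1 else 0).
Definition ket1 (C : numClosedFieldType) : 'cV[C]_2 := \col_i (if i == 1 :> nat then 1 else 0).
Definition ketp (C : numClosedFieldType) : 'cV[C]_2 := (sqrtC 2)^-1 *: (ket0 C + ket1 C).
Definition ketm (C : numClosedFieldType) : 'cV[C]_2 := (sqrtC 2)^-1 *: (ket0 C - ket1 C).

(* computational basis of C^2 (x) C^2: |00>,|01>,|10>,|11> are indices 0,1,2,3
   (first qubit most significant, consistent with tensmx) *)
Definition ket4 (C : numClosedFieldType) (k : 'I_4) : 'cV[C]_4 :=
  \col_i (if i == k then 1 else 0).

(* |x> on H_odd (x) H_even, x in {0,1,2,3} *)
Definition bket (C : numClosedFieldType) (x : 'I_4) : 'cV[C]_8 :=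
  (match val x with 0 => ket0 C | 1 => ket1 C | 2 => ketp C | _ => ketm C end) *t ket4 C x.

Definition bproj (C : numClosedFieldType) (x : 'I_4) : 'M[C]_8 :=
  bket C x *m adjmx (bket C x).

Definition Tset : seq (nat * nat * nat) :=
  [:: (0,0,0); (1,2,0); (2,3,0); (3,1,0); (0,3,1); (1,1,1); (2,0,1); (3,2,1);
      (0,1,2); (1,3,2); (2,2,2); (3,0,2); (0,2,3); (1,0,3); (2,1,3); (3,3,3)]%N.

Definition inT (a b c : 'I_4) : bool := (val a, val b, val c) \in Tset.

Definition Gamma (C : numClosedFieldType) : 'M[C]_(8 * 8 * 8) :=
  2^-1 *: \sum_(t : 'I_4 * 'I_4 * 'I_4 | inT t.1.1 t.1.2 t.2)
            (bproj C t.1.1 *t bproj C t.1.2) *t bproj C t.2.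

From mathcomp Require Import all_boot all_order all_algebra mxtens ring.
Import Order.TTheory GRing.Theory Num.Theory.
Local Open Scope ring_scope.
Set Implicit Arguments. Unset Strict Implicit.

(* Evaluating the decomposition on a product vector u (x) v (x) w gives
     1/2 sum_{(a,b,c) in T} |<a|u>|^2 |<b|v>|^2 |<c|w>|^2
       = sum_i <u, A_i u> <v, B_i v> <w, C_i w>,
   a sum of nonnegative terms, so every term vanishes wherever the left side
   does. Choosing u orthogonal to the orthonormal vectors |0>, ..., |3> shows
   that A_i (and likewise B_i, C_i) lives on their span; choosing basis vectors
   |a>, |b>, |c> with (a,b,c) not in T shows that the indices with a positive
   diagonal entry of A_i, B_i, C_i only form triples of T. As T is a Latin
   square, each factor then has a single such index, and a positive
   semidefinite operator on an orthonormal span with a single nonzero diagonal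
   entry is a positive multiple of the corresponding projector. *)

Section Adjoint.
Variable C : numClosedFieldType.

Lemma adjmxE m n (M : 'M[C]_(m, n)) i j : adjmx M i j = (M j i)^*.
Proof. by rewrite !mxE. Qed.

Lemma adjmxK m n (M : 'M[C]_(m, n)) : adjmx (adjmx M) = M.
Proof. by apply/matrixP=> i j; rewrite !adjmxE conjCK. Qed.

Lemma adjmxM m n p (M : 'M[C]_(m, n)) (N : 'M[C]_(n, p)) :
  adjmx (M *m N) = adjmx N *m adjmx M.
Proof. by rewrite /adjmx trmx_mul map_mxM. Qed.

Lemma adjmxB m n (M N : 'M[C]_(m, n)) : adjmx (M - N) = adjmx M - adjmx N.
Proof. by apply/matrixP=> i j; rewrite !(adjmxE, mxE) rmorphB. Qed.

Lemma adjmxZ m n a (M : 'M[C]_(m, n)) : adjmx (a *: M) = a^* *: adjmx M.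
Proof. by apply/matrixP=> i j; rewrite !(adjmxE, mxE) rmorphM. Qed.

Lemma adjmx_tens m n p q (M : 'M[C]_(m, n)) (N : 'M[C]_(p, q)) :
  adjmx (M *t N) = adjmx M *t adjmx N.
Proof. by apply/matrixP=> i j; rewrite !(adjmxE, mxE) rmorphM. Qed.

End Adjoint.

Section Forms.
Variable C : numClosedFieldType.

Definition dotv n (x y : 'cV[C]_n) : C := (adjmx x *m y) 0 0.

Definition mxform n (M : 'M[C]_n) (x y : 'cV[C]_n) : C := (adjmx x *m M *m y) 0 0.

Lemma mxformBl n M (x y z : 'cV[C]_n) :
  mxform M (x - y) z = mxform M x z - mxform M y z.
Proof. by rewrite /mxform adjmxB !mulmxBl mxE [X in _ + X]mxE. Qed.

Lemma mxformBr n M (x y z : 'cV[C]_n) :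
  mxform M z (x - y) = mxform M z x - mxform M z y.
Proof. by rewrite /mxform !mulmxBr mxE [X in _ + X]mxE. Qed.

Lemma mxformZl n M a (x z : 'cV[C]_n) : mxform M (a *: x) z = a^* * mxform M x z.
Proof. by rewrite /mxform adjmxZ -!scalemxAl mxE. Qed.

Lemma mxformZr n M a (x z : 'cV[C]_n) : mxform M z (a *: x) = a * mxform M z x.
Proof. by rewrite /mxform -scalemxAr mxE. Qed.

Lemma mxform_conj n (M : 'M[C]_n) x y :
  adjmx M = M -> mxform M x y = (mxform M y x)^*.
Proof. by move=> hM; rewrite /mxform -adjmxE !adjmxM adjmxK hM mulmxA. Qed.

Lemma mxformZ n a (M : 'M[C]_n) x y : mxform (a *: M) x y = a * mxform M x y.
Proof. by rewrite /mxform -scalemxAr -scalemxAl mxE. Qed.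

Lemma mxform_sum (I : finType) (P : pred I) n (F : I -> 'M[C]_n) x y :
  mxform (\sum_(i | P i) F i) x y = \sum_(i | P i) mxform (F i) x y.
Proof. by rewrite /mxform mulmx_sumr mulmx_suml summxE. Qed.

Lemma tensmx11 (a b : 'M[C]_1) i j : (a *t b) i j = a 0 0 * b 0 0.
Proof. by rewrite !mxE; congr (a _ _ * b _ _); apply: ord1. Qed.

Lemma dotv_tens m p (x x' : 'cV[C]_m) (y y' : 'cV[C]_p) :
  dotv (x *t y) (x' *t y') = dotv x x' * dotv y y'.
Proof. by rewrite /dotv -(tensmx11 _ _ 0 0) -tensmx_mul -adjmx_tens. Qed.

Lemma mxform_tens m p (M : 'M[C]_m) (N : 'M[C]_p) (x x' : 'cV_m) (y y' : 'cV_p) :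
  mxform (M *t N) (x *t y) (x' *t y') = mxform M x x' * mxform N y y'.
Proof. by rewrite /mxform -(tensmx11 _ _ 0 0) -!tensmx_mul -adjmx_tens. Qed.

Lemma dotvC n (x y : 'cV[C]_n) : dotv y x = (dotv x y)^*.
Proof. by rewrite /dotv -adjmxE adjmxM adjmxK. Qed.

Lemma dotv_self n (y : 'cV[C]_n) : dotv y y = \sum_k `|y k 0| ^+ 2.
Proof. by rewrite /dotv mxE; apply: eq_bigr=> k _; rewrite adjmxE normCKC. Qed.

Lemma dotv_ge0 n (y : 'cV[C]_n) : 0 <= dotv y y.
Proof. by rewrite dotv_self sumr_ge0 // => k _; rewrite exprn_ge0. Qed.

Lemma dotv_eq0 n (y : 'cV[C]_n) : dotv y y = 0 -> y = 0.
Proof.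
rewrite dotv_self => /psumr_eq0P y0; apply/matrixP=> k j; rewrite (ord1 j) mxE.
have /eqP := y0 (fun i _ => exprn_ge0 2 (normr_ge0 (y i 0))) k isT.
by rewrite expf_eq0 normr_eq0 => /eqP.
Qed.

Lemma mxform_proj n (x u : 'cV[C]_n) :
  mxform (x *m adjmx x) u u = `|dotv x u| ^+ 2.
Proof.
rewrite /mxform mulmxA -mulmxA mxE big_ord1.
by rewrite -[LHS]/(dotv u x * dotv x u) normCKC dotvC.
Qed.

Lemma dotv_mul_proj n (x y u : 'cV[C]_n) :
  (adjmx x *m (y *m adjmx y *m u)) 0 0 = dotv x y * dotv y u.
Proof. by rewrite !mulmxA -mulmxA mxE big_ord1. Qed.

End Forms.

Lemma mxcol_eq0 (R : pzSemiRingType) m n (N : 'M[R]_(m, n)) :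
  (forall j, N *m delta_mx j (0 : 'I_1) = 0) -> N = 0.
Proof.
by move=> N0; apply/matrixP=> i j; have /matrixP/(_ i 0) := N0 j; rewrite -colE !mxE.
Qed.

Section Psd.
Variables (C : numClosedFieldType) (n : nat) (M : 'M[C]_n).
Hypothesis psdM : psd M.

Lemma psd_form_ge0 x : 0 <= mxform M x x.
Proof. exact: psdM.2. Qed.

(* Positivity of the form along [a u - N y], with [y = M u], [N = |y|^2] and
   [a = <y, M y> + 1], forces [N^2 (<y, M y> + 2) <= 0]. *)
Lemma psd_form_eq0_ker u : mxform M u u = 0 -> M *m u = 0.
Proof.
move=> u0; set y := M *m u; set N := dotv y y; set c := mxform M y y.
have N0 : 0 <= N := dotv_ge0 y.
have c0 : 0 <= c := psd_form_ge0 y.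
have yu : mxform M y u = N by rewrite /mxform /N /dotv -mulmxA.
have uy : mxform M u y = N by rewrite mxform_conj ?psdM.1 // yu geC0_conj.
have := psd_form_ge0 ((c + 1) *: u - N *: y).
have ca : (c + 1)^* = c + 1 by rewrite geC0_conj ?addr_ge0.
rewrite !(mxformBl, mxformBr, mxformZl, mxformZr) ca (geC0_conj N0) u0 yu uy -/c => h.
have c2 : 0 < c + 2 by rewrite ltr_wpDl.
have : N ^+ 2 * (c + 2) <= 0.
  rewrite -oppr_ge0.
  by rewrite (_ : - _ = (c + 1) * ((c + 1) * 0 - N * N) - N * ((c + 1) * N - N * c)); last ring.
rewrite pmulr_lle0 // => N2le0.
have /eqP : N ^+ 2 = 0 by apply/le_anti; rewrite N2le0 exprn_ge0.
by rewrite expf_eq0 => /eqP; exact: dotv_eq0.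
Qed.

Lemma psd_neq0_witness : M != 0 -> exists v, 0 < mxform M v v.
Proof.
move=> M0; pose d j : 'cV[C]_n := delta_mx j 0.
have [j Mj | Mker] := pickP (fun j => mxform M (d j) (d j) != 0).
  by exists (d j); rewrite lt0r Mj psd_form_ge0.
case/eqP: M0; apply: mxcol_eq0 => j.
by rewrite psd_form_eq0_ker ?(eqP (negbFE (Mker j))).
Qed.

End Psd.

Section Orthonormal.
Variables (C : numClosedFieldType) (n : nat) (I : finType) (e : I -> 'cV[C]_n).
Hypothesis e_orthonormal : forall i j, dotv (e i) (e j) = (i == j)%:R.

Definition supported_on (M : 'M[C]_n) :=
  forall u, (forall i, dotv (e i) u = 0) -> mxform M u u = 0.

Variable M : 'M[C]_n.
Hypotheses (psdM : psd M) (suppM : supported_on M).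

Lemma supported_decomp : M = \sum_i (M *m e i) *m adjmx (e i).
Proof.
pose P := \sum_i e i *m adjmx (e i).
have perpP x j : dotv (e j) ((1%:M - P) *m x) = 0.
  rewrite /dotv mulmxBl mul1mx mulmxBr mulmx_suml mulmx_sumr mxE [X in _ + X]mxE.
  rewrite summxE (bigD1 j) //= big1 ?addr0 => [|i ij].
    by rewrite dotv_mul_proj e_orthonormal eqxx mul1r subrr.
  by rewrite dotv_mul_proj e_orthonormal eq_sym (negbTE ij) mul0r.
have MP : M *m (1%:M - P) = 0.
  by apply: mxcol_eq0 => j; rewrite -mulmxA psd_form_eq0_ker // suppM.
rewrite -[M in LHS]mulmx1 -[1%:M](subrK P) mulmxDr MP add0r mulmx_sumr.
by apply: eq_bigr => i _; rewrite mulmxA.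
Qed.

Lemma supported_witness : M != 0 -> exists i, 0 < mxform M (e i) (e i).
Proof.
move=> M0; have [i Mi | Mker] := pickP (fun i => mxform M (e i) (e i) != 0).
  by exists i; rewrite lt0r Mi psd_form_ge0.
case/eqP: M0; rewrite supported_decomp big1 // => i _.
by rewrite psd_form_eq0_ker ?mul0mx ?(eqP (negbFE (Mker i))).
Qed.

Lemma supported_rank1 i : (forall j, 0 < mxform M (e j) (e j) -> j = i) ->
  M = mxform M (e i) (e i) *: (e i *m adjmx (e i)).
Proof.
move=> uniq_i.
have Me : M = (M *m e i) *m adjmx (e i).
  rewrite {1}supported_decomp (bigD1 i) //= big1 ?addr0 // => j ji.
  have Mj0 : mxform M (e j) (e j) = 0.
    apply/eqP; apply: contraNT ji => Mj.
    by apply/eqP/uniq_i; rewrite lt0r Mj psd_form_ge0.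
  by rewrite psd_form_eq0_ker ?mul0mx.
have eM : M = e i *m (adjmx (e i) *m M).
  by rewrite -{1}psdM.1 {1}Me !adjmxM adjmxK psdM.1.
have Mei : M *m e i = mxform M (e i) (e i) *: e i.
  by rewrite {1}eM -!mulmxA [adjmx (e i) *m _]mx11_scalar mul_mx_scalar mulmxA.
by rewrite {1}Me Mei scalemxAl.
Qed.

End Orthonormal.

Section Kets.
Variable C : numClosedFieldType.

Definition qket (x : 'I_4) : 'cV[C]_2 :=
  match val x with 0 => ket0 C | 1 => ket1 C | 2 => ketp C | _ => ketm C end.

Lemma dotv_qket x : dotv (qket x) (qket x) = 1.
Proof.
set s := (sqrtC (2 : C))^-1.
have s_ge0 : 0 <= s by rewrite invr_ge0 sqrtC_ge0 ler0n.
have sK : s^* = s by rewrite geC0_conj.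
have sNK : (- s)^* = - s by apply: conj_Creal; rewrite realN ger0_real.
have ss : s * s = 2^-1 by rewrite -expr2 exprVn sqrtCK.
case: x => [[|[|[|[|//]]]] ?];
  rewrite /qket /= /dotv mxE !big_ord_recr big_ord0 /= !adjmxE !mxE /= -/s.
all: rewrite ?(addr0, add0r, subr0, sub0r, mulr1, mulr0, mulrN, conjC0, conjC1).
all: rewrite ?(sK, sNK) ?mulNr ?opprK ?(mulr1, mul1r, mul0r, addr0, add0r) //.
all: by rewrite ss [RHS](splitr 1) mul1r.
Qed.

Lemma dotv_ket4 a b : dotv (ket4 C a) (ket4 C b) = (a == b)%:R.
Proof.
rewrite /dotv mxE (bigD1 a) //= big1 => [|k ka].
  by rewrite !mxE eqxx conjC1 mul1r addr0; case: (a == b).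
by rewrite !mxE (negbTE ka) conjC0 mul0r.
Qed.

Lemma bket_orthonormal a b : dotv (bket C a) (bket C b) = (a == b)%:R.
Proof.
transitivity (dotv (qket a) (qket b) * dotv (ket4 C a) (ket4 C b)).
  exact: (dotv_tens (qket a) (qket b) (ket4 C a) (ket4 C b)).
by rewrite dotv_ket4; case: eqVneq => [->|]; rewrite ?dotv_qket ?mulr1 ?mulr0.
Qed.

End Kets.

Section GammaForm.
Variable C : numClosedFieldType.

Lemma Gamma_form_tens (u v w : 'cV[C]_8) :
  mxform (Gamma C) ((u *t v) *t w) ((u *t v) *t w) =
  2^-1 * \sum_(t : 'I_4 * 'I_4 * 'I_4 | inT t.1.1 t.1.2 t.2)
    `|dotv (bket C t.1.1) u| ^+ 2 * `|dotv (bket C t.1.2) v| ^+ 2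
      * `|dotv (bket C t.2) w| ^+ 2.
Proof.
rewrite mxformZ mxform_sum; congr (_ * _); apply: eq_bigr => t _.
by rewrite !mxform_tens !mxform_proj.
Qed.

Lemma Gamma_form_orth (u v w : 'cV[C]_8) :
  [\/ forall a, dotv (bket C a) u = 0, forall a, dotv (bket C a) v = 0
    | forall a, dotv (bket C a) w = 0] ->
  mxform (Gamma C) ((u *t v) *t w) ((u *t v) *t w) = 0.
Proof.
move=> orth; rewrite Gamma_form_tens big1 ?mulr0 // => t _.
by case: orth => ->; rewrite normr0 expr0n ?(mulr0, mul0r).
Qed.

Lemma Gamma_form_notinT a b c : ~~ inT a b c ->
  mxform (Gamma C) ((bket C a *t bket C b) *t bket C c)
                   ((bket C a *t bket C b) *t bket C c) = 0.
Proof.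
move=> abc; rewrite Gamma_form_tens big1 ?mulr0 // => [[[x y] z]] /= xyz.
rewrite /= !bket_orthonormal.
have [xa | _] := eqVneq x a; last by rewrite normr0 expr0n !mul0r.
have [yb | _] := eqVneq y b; last by rewrite normr0 expr0n mulr0 mul0r.
have [zc | _] := eqVneq z c; last by rewrite normr0 expr0n mulr0.
by move: abc; rewrite -xa -yb -zc xyz.
Qed.

End GammaForm.

Lemma inT_unique1 (a a' b c : 'I_4) : inT a b c -> inT a' b c -> a = a'.
Proof.
move: a a' b c; do 4! case=> [[|[|[|[|//]]]] ?]; rewrite /inT //= => _ _; exact: val_inj.
Qed.

Lemma inT_unique2 (a b b' c : 'I_4) : inT a b c -> inT a b' c -> b = b'.
Proof.
move: a b b' c; do 4! case=> [[|[|[|[|//]]]] ?]; rewrite /inT //= => _ _; exact: val_inj.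
Qed.

Lemma inT_unique3 (a b c c' : 'I_4) : inT a b c -> inT a b c' -> c = c'.
Proof.
move: a b c c'; do 4! case=> [[|[|[|[|//]]]] ?]; rewrite /inT //= => _ _; exact: val_inj.
Qed.

Section Decomposition.
Variables (C : numClosedFieldType) (n : nat) (A B D : 'I_n -> 'M[C]_8).
Hypotheses (hA : forall i, A i != 0 /\ psd (A i))
  (hB : forall i, B i != 0 /\ psd (B i)) (hD : forall i, D i != 0 /\ psd (D i)).
Hypothesis decompG : Gamma C = \sum_(i < n) (A i *t B i) *t D i.
Variable i : 'I_n.

Lemma term_form_eq0 (u v w : 'cV[C]_8) :
  mxform (Gamma C) ((u *t v) *t w) ((u *t v) *t w) = 0 ->
  mxform (A i) u u * mxform (B i) v v * mxform (D i) w w = 0.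
Proof.
rewrite decompG mxform_sum; under eq_bigr do rewrite !mxform_tens.
move=> /psumr_eq0P -> // j _.
rewrite !mulr_ge0 // psd_form_ge0 //.
- exact: (hA j).2.
- exact: (hB j).2.
- exact: (hD j).2.
Qed.

Lemma factors_supported : [/\ supported_on (bket C) (A i),
  supported_on (bket C) (B i) & supported_on (bket C) (D i)].
Proof.
have [u u0] := psd_neq0_witness (hA i).2 (hA i).1.
have [v v0] := psd_neq0_witness (hB i).2 (hB i).1.
have [w w0] := psd_neq0_witness (hD i).2 (hD i).1.
split=> x orth_x.
- have /eqP := term_form_eq0 (@Gamma_form_orth C x v w (Or31 _ _ orth_x)).
  by rewrite !mulf_eq0 (gt_eqF v0) (gt_eqF w0) !orbF => /eqP.
- have /eqP := term_form_eq0 (@Gamma_form_orth C u x w (Or32 _ _ orth_x)).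
  by rewrite !mulf_eq0 (gt_eqF u0) (gt_eqF w0) orbF orFb => /eqP.
- have /eqP := term_form_eq0 (@Gamma_form_orth C u v x (Or33 _ _ orth_x)).
  by rewrite !mulf_eq0 (gt_eqF u0) (gt_eqF v0) !orFb => /eqP.
Qed.

Lemma factors_inT a b c :
  0 < mxform (A i) (bket C a) (bket C a) -> 0 < mxform (B i) (bket C b) (bket C b) ->
  0 < mxform (D i) (bket C c) (bket C c) -> inT a b c.
Proof.
move=> a0 b0 c0; apply/negPn/negP => abc.
by have /eqP := term_form_eq0 (Gamma_form_notinT C abc); rewrite !mulf_eq0 !gt_eqF.
Qed.

End Decomposition.

Unset Implicit Arguments.

Theorem lemma3 (C : numClosedFieldType) (n : nat) (A B D : 'I_n -> 'M[C]_8) :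
  (forall i, A i != 0 /\ psd (A i)) ->
  (forall i, B i != 0 /\ psd (B i)) ->
  (forall i, D i != 0 /\ psd (D i)) ->
  Gamma C = \sum_(i < n) (A i *t B i) *t D i ->
  forall i : 'I_n, exists alpha beta gamma : C,
    [/\ 0 < alpha, 0 < beta & 0 < gamma] /\
    exists a b c : 'I_4,
      [/\ inT a b c, A i = alpha *: bproj C a, B i = beta *: bproj C b
        & D i = gamma *: bproj C c].
Proof.
move=> hA hB hD decompG i.
have [suppA suppB suppD] := factors_supported hA hB hD decompG i.
have inT_pos := factors_inT hA hB hD decompG (i := i).
have orth := bket_orthonormal C.
have [a a0] := supported_witness orth (hA i).2 suppA (hA i).1.
have [b b0] := supported_witness orth (hB i).2 suppB (hB i).1.
have [c c0] := supported_witness orth (hD i).2 suppD (hD i).1.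
have abc := inT_pos _ _ _ a0 b0 c0.
exists (mxform (A i) (bket C a) (bket C a)), (mxform (B i) (bket C b) (bket C b)),
  (mxform (D i) (bket C c) (bket C c)).
split=> //; exists a, b, c; split=> //.
- apply: (supported_rank1 orth (hA i).2 suppA) => a' a'0.
  exact: inT_unique1 (inT_pos _ _ _ a'0 b0 c0) abc.
- apply: (supported_rank1 orth (hB i).2 suppB) => b' b'0.
  exact: inT_unique2 (inT_pos _ _ _ a0 b'0 c0) abc.
- apply: (supported_rank1 orth (hD i).2 suppD) => c' c'0.
  exact: inT_unique3 (inT_pos _ _ _ a0 b0 c'0) abc.
Qed.
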